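(* Let $\mathbf{k}$ be an algebraically closed field of prime characteristic $p$, and let $R(p)$ be the Radford algebra over $\mathbf{k}$. Then for every positive integer $n$, the $n$-th higher Frobenius–Schur indicator of $R(p)$ is \[ \nu_n(R(p))=\begin{cases} 1 & \text{if } n\not\equiv 0 \pmod p,\\ 0 & \text{if } n\equiv 0 \pmod p.\end{cases} \]
   Context: The Radford algebra $R(p)$ is the Hopf algebra over $\mathbf{k}$ generated as an algebra by $g,x$ subject to the relations $g^p=1$, $x^p=x$, $gx-xg=g^2-g$ if $p>2$, and $g^2=1$, $x^2=x$, $gx-xg=1-g$ if $p=2$; its coalgebra structure is given by $\Delta(g)=g\otimes g$, $\Delta(x)=x\otimes 1+g\otimes x$, $\varepsilon(g)=1$, $\varepsilon(x)=0$. It has dimension $p^2$ with basis $\{g^ix^j : 0\le i,j\le p-1\}$. For a finite-dimensional Hopf algebra $H$ with multiplication $m$, comultiplication $\Delta$, counit $\varepsilon$ and antipode $S$: let $\Delta^{(1)}=\mathrm{id}$, $\Delta^{(n)}=(\Delta^{(n-1)}\otimes\mathrm{id})\circ\Delta$ for $n\ge 2$, let $m^{(n)}(h_1\otimes\cdots\otimes h_n)=h_1\cdots h_n$, and define the Sweedler power maps $P_0(h)=\varepsilon(h)1_H$ and $P_n=m^{(n)}\circ\Delta^{(n)}$ for $n\ge1$. The $n$-th (higher Frobenius–Schur) indicator of $H$ is $\nu_n(H)=\mathrm{Tr}(S\circ P_{n-1})\in\mathbf{k}$, the trace of the linear map $S\circ P_{n-1}:H\to H$. *)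

(* Finite-dimensional Hopf algebra notions written in
   coordinates with respect to a fixed basis (no tensor products in MathComp). *)
From HB Require Import structures.
From mathcomp Require Import all_boot all_order all_algebra.
From mathcomp Require Import falgebra.
Set Implicit Arguments. Unset Strict Implicit. Unset Printing Implicit Defensive.
Import Order.TTheory GRing.Theory.
Local Open Scope ring_scope.

Section Coordinates.
Variables (k : fieldType) (H : falgType k) (B : finType) (b : B -> H).

Definition basisT : #|B|.-tuple H := [tuple b (enum_val i) | i < #|B|].
Definition crd (beta : B) (h : H) : k := coord basisT (enum_rank beta) h.

(* Elements of H (x) H are represented by their coefficient functions
   u : B -> B -> k, meaning  sum_{beta,gamma} u beta gamma  b beta (x) b gamma. *)
Definition pt2 (h1 h2 : H) : B -> B -> k := fun be ga => crd be h1 * crd ga h2.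
Definition tadd2 (u v : B -> B -> k) : B -> B -> k := fun be ga => u be ga + v be ga.
(* multiplication of H (x) H : (a (x) c)(a' (x) c') = a a' (x) c c' *)
Definition tmul2 (u v : B -> B -> k) : B -> B -> k := fun be ga =>
  \sum_(b1 : B) \sum_(c1 : B) \sum_(b2 : B) \sum_(c2 : B)
     u b1 c1 * v b2 c2 * crd be (b b1 * b b2) * crd ga (b c1 * b c2).
Definition tone2 : B -> B -> k := pt2 1 1.
Definition tpow2 (u : B -> B -> k) (m : nat) : B -> B -> k := iter m (tmul2 u) tone2.

(* Delta^{(n)} in coordinates, for a comultiplication Delta given in coordinates:
   DeltaN m h s = coefficient of  b s_1 (x) ... (x) b s_{m+1}  in Delta^{(m+1)}(h).
   Delta^{(1)} = id ;  Delta^{(n)} = (Delta^{(n-1)} (x) id) o Delta. *)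
Fixpoint DeltaN (Delta : H -> B -> B -> k) (m : nat) (h : H) (s : seq B) : k :=
  match m with
  | 0 => if s is [:: be] then crd be h else 0
  | m'.+1 =>
      match rev s with
      | l :: rs => \sum_(be : B) Delta h be l * DeltaN Delta m' (b be) (rev rs)
      | [::] => 0
      end
  end.

Definition prodB (s : seq B) : H := \prod_(be <- s) b be.

(* Sweedler power maps: P_0 = eps(.) 1,  P_n = m^{(n)} o Delta^{(n)} *)
Definition Pw (Delta : H -> B -> B -> k) (eps : H -> k) (n : nat) (h : H) : H :=
  match n with
  | 0 => eps h *: 1
  | m.+1 => \sum_(s : m.+1.-tuple B) DeltaN Delta m h s *: prodB s
  end.

(* nu_n = Tr (S o P_{n-1}), trace computed in the basis b *)
Definition indicator (Delta : H -> B -> B -> k) (eps : H -> k) (S : H -> H)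
    (n : nat) : k :=
  \sum_(be : B) crd be (S (Pw Delta eps n.-1 (b be))).

Definition is_antipode (Delta : H -> B -> B -> k) (eps : H -> k) (S : H -> H) :=
  (forall h, \sum_(be : B) \sum_(ga : B) Delta h be ga *: (S (b be) * b ga) = eps h *: 1)
  /\ (forall h, \sum_(be : B) \sum_(ga : B) Delta h be ga *: (b be * S (b ga)) = eps h *: 1).

End Coordinates.

Section Radford.
Variables (k : fieldType) (H : falgType k) (p : nat) (g x : H).

Definition radB (ij : 'I_p * 'I_p) : H := g ^+ ij.1 * x ^+ ij.2.

Definition radford_relations : Prop :=
  if p == 2%N then [/\ g ^+ 2 = 1, x ^+ 2 = x & g * x - x * g = 1 - g]
  else [/\ g ^+ p = 1, x ^+ p = x & g * x - x * g = g ^+ 2 - g].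

(* Delta is the algebra map with Delta g = g (x) g, Delta x = x (x) 1 + g (x) x,
   so Delta (g^i x^j) = (g (x) g)^i (x (x) 1 + g (x) x)^j; extended linearly. *)
Definition radDelta_basis (ij : 'I_p * 'I_p) : 'I_p * 'I_p -> 'I_p * 'I_p -> k :=
  tmul2 radB (tpow2 radB (pt2 radB g g) ij.1)
             (tpow2 radB (tadd2 (pt2 radB x 1) (pt2 radB g x)) ij.2).
Definition radDelta (h : H) : 'I_p * 'I_p -> 'I_p * 'I_p -> k := fun be ga =>
  \sum_(al : 'I_p * 'I_p) crd radB al h * radDelta_basis al be ga.

(* eps is the algebra map with eps g = 1, eps x = 0 *)
Definition radEps (h : H) : k :=
  \sum_(al : 'I_p * 'I_p) crd radB al h * ((1 : k) ^+ al.1 * (0 : k) ^+ al.2).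

End Radford.

Arguments radB {k H} p g x ij.
Arguments radford_relations {k H} p g x.
Arguments radDelta {k H} p g x h _ _.
Arguments radEps {k H} p g x h.

From HB Require Import structures.
From mathcomp Require Import all_boot all_order all_algebra.
From mathcomp Require Import falgebra.
From mathcomp Require Import ring zify.
From Stdlib Require Import FunctionalExtensionality.
Import GRing.Theory.
Local Open Scope ring_scope.

Set Implicit Arguments. Unset Strict Implicit. Unset Printing Implicit Defensive.

(* Filter R(p) by the degree in x.  In the basis g^i x^j the Sweedler powers and the
   antipode are triangular: modulo lower x-degree,
     P_(m+1)(g^i x^j) = g^((m+1)i) (1 + g + ... + g^m)^j x^j,
     S(g^i x^j)       = g^(-i) (-g^(-1))^j x^j,
   the first by induction on m from Delta(x) = x (x) 1 + g (x) x, the second by induction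
   on j from the antipode identity; both rest on g and x commuting up to terms of
   x-degree 0.  Hence the diagonal entry of S o P_(m+1) at g^i x^j is the coefficient of
   g^((m+2)i) in W_j(g) = (1 + g^(-1) + ... + g^(-m))^j (-g^(-1))^j.  Summing over i
   counts the solutions of (m+2)i = c (mod p): one for each c if p does not divide m+2,
   and p (i.e. zero in k) for c = 0 otherwise.  In the first case the trace is
   sum_(j<p) W_j(1) = sum_(j<p) (-(m+1))^j = 1, as -(m+1) is a Frobenius-fixed
   element different from 1. *)

Lemma sum_tupleS (T : finType) (V : nmodType) n (F : seq T -> V) :
  \sum_(s : n.+1.-tuple T) F s = \sum_(l : T) \sum_(t : n.-tuple T) F (l :: t).
Proof.
rewrite pair_big /= (reindex (fun lt : T * n.-tuple T => cons_tuple lt.1 lt.2)) //=.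
exists (fun s : n.+1.-tuple T => (thead s, behead_tuple s)) => [[l t] _|s _] /=.
  by congr (_, _); apply: val_inj.
by rewrite [RHS]tuple_eta.
Qed.

Lemma sum_tuple_rev (T : finType) (V : nmodType) n (F : seq T -> V) :
  \sum_(s : n.-tuple T) F s = \sum_(s : n.-tuple T) F (rev s).
Proof.
rewrite (reindex_inj (h := @rev_tuple n T)) //.
by move=> s t /(congr1 val) /= /(congr1 rev); rewrite !revK => /val_inj.
Qed.

Section BasisCoordinates.
Variables (k : fieldType) (H : falgType k) (B : finType) (b : B -> H).

Fact crd_is_scalar be : scalar (crd b be).
Proof. exact: coord_is_scalar. Qed.
HB.instance Definition _ be :=
  GRing.isLinear.Build k H k *%R (crd b be) (crd_is_scalar be).

(* m o (F (x) id), on elements of H (x) H given by coordinates as in [pt2]. *)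
Definition mulFid (F : H -> H) (u : B -> B -> k) : H :=
  \sum_(be : B) \sum_(l : B) u be l *: (F (b be) * b l).

Lemma mulFidD F u v : mulFid F (tadd2 u v) = mulFid F u + mulFid F v.
Proof.
rewrite /mulFid -big_split; apply: eq_bigr => be _.
by rewrite -big_split; apply: eq_bigr => l _; rewrite scalerDl.
Qed.

Lemma tmul2DL u v w : tmul2 b (tadd2 u v) w = tadd2 (tmul2 b u w) (tmul2 b v w).
Proof.
do 2!apply: functional_extensionality => ?; rewrite /tmul2 /tadd2 -big_split.
apply: eq_bigr => ? _; rewrite -big_split; apply: eq_bigr => ? _.
rewrite -big_split; apply: eq_bigr => ? _; rewrite -big_split; apply: eq_bigr => ? _.
by rewrite !mulrDl.
Qed.

Lemma tmul2DR u v w : tmul2 b w (tadd2 u v) = tadd2 (tmul2 b w u) (tmul2 b w v).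
Proof.
do 2!apply: functional_extensionality => ?; rewrite /tmul2 /tadd2 -big_split.
apply: eq_bigr => ? _; rewrite -big_split; apply: eq_bigr => ? _.
rewrite -big_split; apply: eq_bigr => ? _; rewrite -big_split; apply: eq_bigr => ? _.
by rewrite !mulrDr !mulrDl.
Qed.

Lemma PwSS D e m h : Pw b D e m.+2 h = mulFid (Pw b D e m.+1) (D h).
Proof.
rewrite /= (sum_tuple_rev m.+2 (fun s => DeltaN b D m.+1 h s *: prodB b s)).
rewrite (sum_tupleS m.+1 (fun s => DeltaN b D m.+1 h (rev s) *: prodB b (rev s))).
rewrite /mulFid [RHS]exchange_big; apply: eq_bigr => l _.
under [RHS]eq_bigr => be _ do rewrite mulr_suml scaler_sumr.
rewrite [RHS]exchange_big [RHS](sum_tuple_rev m.+1 (fun s => \sum_be D h be l *: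
  (DeltaN b D m (b be) s *: prodB b s * b l))).
apply: eq_bigr => t _; rewrite rev_cons /= rev_rcons revK scaler_suml.
by apply: eq_bigr => be _; rewrite /prodB big_rcons /= -scalerAl scalerA.
Qed.

Hypothesis b_basis : basis_of fullv (basisT b).

Lemma basisT_nth be : (basisT b)`_(enum_rank be) = b be.
Proof. by rewrite -tnth_nth tnth_mktuple enum_rankK. Qed.

Lemma crd_basis be be' : crd b be (b be') = (be' == be)%:R.
Proof.
rewrite /crd -basisT_nth coord_free; last by case/andP: b_basis.
by rewrite (inj_eq enum_rank_inj).
Qed.

Lemma crd_expand h : h = \sum_(be : B) crd b be h *: b be.
Proof.
have h_span : h \in <<basisT b>>%VS by case/andP: b_basis => /eqP -> _; apply: memvf.
rewrite {1}(coord_span h_span) (reindex (@enum_rank B)) /=; last first.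
  by exists enum_val => i _; [rewrite enum_rankK | rewrite enum_valK].
by apply: eq_bigr => be _; rewrite basisT_nth.
Qed.

Lemma crd_inj h1 h2 : (forall be, crd b be h1 = crd b be h2) -> h1 = h2.
Proof.
move=> eq_crd; rewrite (crd_expand h1) (crd_expand h2).
by apply: eq_bigr => be _; rewrite eq_crd.
Qed.

Lemma crd_mulr_expand (a y : H) ga :
  crd b ga (a * y) = \sum_(be : B) crd b be y * crd b ga (a * b be).
Proof.
rewrite {1}(crd_expand y) mulr_sumr linear_sum; apply: eq_bigr => be _.
by rewrite -scalerAr linearZ.
Qed.

Lemma crd_mull_expand (y a : H) ga :
  crd b ga (y * a) = \sum_(be : B) crd b be y * crd b ga (b be * a).
Proof.
rewrite {1}(crd_expand y) mulr_suml linear_sum; apply: eq_bigr => be _.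
by rewrite -scalerAl linearZ.
Qed.

Lemma tmul2_pt2l a c v be ga :
  tmul2 b (pt2 b a c) v be ga =
  \sum_(b2 : B) \sum_(c2 : B) v b2 c2 * crd b be (a * b b2) * crd b ga (c * b c2).
Proof.
rewrite /tmul2 /pt2.
transitivity (\sum_(b1 : B) \sum_(b2 : B) \sum_(c2 : B) \sum_(c1 : B)
   crd b b1 a * crd b c1 c * v b2 c2 * crd b be (b b1 * b b2) * crd b ga (b c1 * b c2)).
  apply: eq_bigr => b1 _; rewrite exchange_big; apply: eq_bigr => b2 _.
  by rewrite exchange_big.
rewrite exchange_big; apply: eq_bigr => b2 _.
rewrite exchange_big; apply: eq_bigr => c2 _.
rewrite (crd_mull_expand a) mulr_sumr mulr_suml; apply: eq_bigr => b1 _.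
by rewrite (crd_mull_expand c) !mulr_sumr; apply: eq_bigr => c1 _; ring.
Qed.

Lemma tmul2_pt2 a c a' c' :
  tmul2 b (pt2 b a c) (pt2 b a' c') = pt2 b (a * a') (c * c').
Proof.
do 2!apply: functional_extensionality => ?; rewrite tmul2_pt2l /pt2.
rewrite (crd_mulr_expand a) mulr_suml; apply: eq_bigr => b2 _.
by rewrite (crd_mulr_expand c) !mulr_sumr; apply: eq_bigr => c2 _; ring.
Qed.

Lemma tmul2_pt2A a c a' c' w :
  tmul2 b (pt2 b a c) (tmul2 b (pt2 b a' c') w) = tmul2 b (pt2 b (a * a') (c * c')) w.
Proof.
apply: functional_extensionality => be; apply: functional_extensionality => ga.
rewrite !tmul2_pt2l.
under eq_bigr => ? _ do under eq_bigr => ? _ do rewrite tmul2_pt2l !mulr_suml.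
under eq_bigr => ? _ do under eq_bigr => ? _ do under eq_bigr => ? _ do rewrite !mulr_suml.
under eq_bigr => ? _ do rewrite exchange_big.
rewrite exchange_big; apply: eq_bigr => b3 _.
under eq_bigr => ? _ do rewrite exchange_big.
rewrite exchange_big; apply: eq_bigr => c3 _.
rewrite -!mulrA (crd_mulr_expand a) (crd_mulr_expand c) mulr_suml mulr_sumr.
by apply: eq_bigr => b2 _; rewrite !mulr_sumr; apply: eq_bigr => c2 _; ring.
Qed.

Lemma tpow2_pt2 a c n : tpow2 b (pt2 b a c) n = pt2 b (a ^+ n) (c ^+ n).
Proof. by elim: n => [|n IHn] //; rewrite /tpow2 iterS -/(tpow2 _ _ _) IHn tmul2_pt2 -!exprS. Qed.

Lemma mulFid_pt2 (F : {linear H -> H}) a c : mulFid F (pt2 b a c) = F a * c.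
Proof.
rewrite {2}(crd_expand a) {2}(crd_expand c) linear_sum mulr_suml.
apply: eq_bigr => be _; rewrite linearZ mulr_sumr; apply: eq_bigr => l _.
by rewrite /pt2 -scalerAl -scalerAr scalerA.
Qed.

Lemma Pw1 D e h : Pw b D e 1 h = h.
Proof.
rewrite /= [RHS](crd_expand h) (sum_tupleS 0 (fun s => DeltaN b D 0 h s *: prodB b s)).
apply: eq_bigr => l _; rewrite (big_pred1 [tuple]) => [|t]; last first.
  by apply/esym/eqP/val_inj; case: t => [[|? ?]].
by rewrite /prodB big_seq1.
Qed.

End BasisCoordinates.

Unset Implicit Arguments.

Lemma sum_coef (k : nzRingType) (P : {poly k}) : \sum_(i < size P) P`_i = P.[1].
Proof. by rewrite horner_coef; apply: eq_bigr => i _; rewrite expr1n mulr1. Qed.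

Lemma sum_expr_fixed (F : fieldType) (p : nat) (a : F) :
  a ^+ p = a -> a != 1 -> \sum_(j < p) a ^+ j = 1.
Proof.
move=> a_p a_neq1; have a1_neq0 : a - 1 != 0 by rewrite subr_eq0.
by apply: (mulfI a1_neq0); rewrite -subrX1 a_p mulr1.
Qed.

Lemma mul_modp_inj (p n : nat) : prime p -> ~~ (p %| n)%N ->
  injective (fun i : 'I_p => (n * i) %% p)%N.
Proof.
move=> p_pr p_n i1 i2; wlog le12 : i1 i2 / (i1 <= i2)%N.
  by move=> W eq12; case: (leqP i1 i2) => [|/ltnW] le; [apply: W | apply/esym/W/esym].
move/eqP; rewrite eq_sym eqn_mod_dvd ?leq_mul2l ?le12 ?orbT // -mulnBr.
rewrite Gauss_dvdr ?prime_coprime // => dvd_p.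
apply/val_inj/eqP; rewrite eqn_leq le12 /= -subn_eq0; apply/contraT; rewrite -lt0n.
by move=> /dvdn_leq /(_ dvd_p); have := ltn_ord i2; lia.
Qed.

Lemma sum_mul_modp_eq (k : fieldType) (p n c : nat) : p \in [pchar k] ->
  \sum_(i < p) (((n * i) %% p == c %% p)%N%:R : k) = if (p %| n)%N then 0 else 1.
Proof.
move=> p_char; have p_pr := pcharf_prime p_char; have p_gt0 := prime_gt0 p_pr.
case: ifP => [p_n | /negbT p_n].
  under eq_bigr => i _ do rewrite (eqP (dvdn_mulr i p_n)).
  by rewrite sumr_const card_ord -[_ *+ p]mulr_natr (pcharf0 p_char) mulr0.
pose h (i : 'I_p) : 'I_p := Ordinal (ltn_pmod (n * i) p_gt0).
have h_inj : injective h by move=> i1 i2 /(congr1 val) /(mul_modp_inj p n p_pr p_n).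
pose F (j : 'I_p) : k := ((j : nat) == c %% p)%N%:R.
transitivity (\sum_(i < p) F (h i)); first by [].
rewrite -(reindex_inj (P := xpredT) h_inj) /F.
rewrite (bigD1 (Ordinal (ltn_pmod c p_gt0))) //= eqxx big1 ?addr0 // => j ne_j.
by case: eqP => // eq_j; case/eqP: ne_j; apply: val_inj.
Qed.

Section Radford.
Variables (k : fieldType) (H : falgType k) (p : nat) (g x : H).
Hypotheses (p_gt1 : (1 < p)%N) (gp : g ^+ p = 1) (xp : x ^+ p = x).
Hypothesis gx_comm : g * x - x * g = g ^+ 2 - g.
Hypothesis b_basis : basis_of fullv (basisT (radB p g x)).

Local Notation b := (radB p g x).
Local Notation B := ('I_p * 'I_p)%type.
Local Notation evg := (horner_alg g).

Lemma p_gt0 : (0 < p)%N. Proof. exact: ltnW. Qed.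

Definition ordp (e : nat) : 'I_p := Ordinal (ltn_pmod e p_gt0).

Lemma radB_ordp e (j : 'I_p) : b (ordp e, j) = g ^+ e * x ^+ j.
Proof. by rewrite /radB /= expr_mod. Qed.

Lemma crd_gx (be : B) e (j : 'I_p) :
  crd b be (g ^+ e * x ^+ j) = ((be.1 == (e %% p)%N :> nat) && (be.2 == j :> nat))%:R.
Proof.
by case: be => i j'; rewrite -radB_ordp crd_basis // eq_sym xpair_eqE -!val_eqE.
Qed.

Definition xdeg_lt (j : nat) (h : H) := forall be : B, (j <= be.2)%N -> crd b be h = 0.

Lemma xdeg_lt_zero j : xdeg_lt j 0.
Proof. by move=> be _; rewrite linear0. Qed.

Lemma xdeg_ltD j h1 h2 : xdeg_lt j h1 -> xdeg_lt j h2 -> xdeg_lt j (h1 + h2).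
Proof. by move=> h1j h2j be le_j; rewrite linearD /= h1j // h2j // addr0. Qed.

Lemma xdeg_ltZ j c h : xdeg_lt j h -> xdeg_lt j (c *: h).
Proof. by move=> hj be le_j; rewrite linearZ /= hj // mulr0. Qed.

Lemma xdeg_ltN j h : xdeg_lt j h -> xdeg_lt j (- h).
Proof. by move=> hj; rewrite -scaleN1r; apply: xdeg_ltZ. Qed.

Lemma xdeg_ltB j h1 h2 : xdeg_lt j h1 -> xdeg_lt j h2 -> xdeg_lt j (h1 - h2).
Proof. by move=> h1j /xdeg_ltN; apply: xdeg_ltD. Qed.

Lemma xdeg_lt_sum j (I : Type) (r : seq I) (P : pred I) (F : I -> H) :
  (forall i, P i -> xdeg_lt j (F i)) -> xdeg_lt j (\sum_(i <- r | P i) F i).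
Proof. by move=> Fj; apply: big_ind => //; [apply: xdeg_lt_zero | apply: xdeg_ltD]. Qed.

Lemma xdeg_lt_le j j' h : (j <= j')%N -> xdeg_lt j h -> xdeg_lt j' h.
Proof. by move=> le_jj' hj be le_j'; apply: hj; apply: leq_trans le_j'. Qed.

Lemma xdeg_lt0_eq0 h : xdeg_lt 0 h -> h = 0.
Proof. by move=> h0; apply: (crd_inj b_basis) => be; rewrite h0 // linear0. Qed.

Lemma xdeg_lt_ind (P : H -> Prop) a :
  P 0 -> (forall h1 h2, P h1 -> P h2 -> P (h1 + h2)) ->
  (forall c h, P h -> P (c *: h)) ->
  (forall i j, (j < a)%N -> (j < p)%N -> P (g ^+ i * x ^+ j)) ->
  forall h, xdeg_lt a h -> P h.
Proof.
move=> P0 PD PZ Pgx h ha; rewrite (crd_expand b_basis h).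
apply: big_ind => // -[i j] _; have [lt_ja | le_aj] := ltnP j a.
  by apply: PZ; apply: Pgx.
by rewrite ha // scale0r.
Qed.

Lemma xdeg_lt_map (f : H -> H) a c :
  {morph f : u v / u + v} -> (forall t u, f (t *: u) = t *: f u) ->
  (forall i j, (j < a)%N -> (j < p)%N -> xdeg_lt c (f (g ^+ i * x ^+ j))) ->
  forall h, xdeg_lt a h -> xdeg_lt c (f h).
Proof.
move=> fD fZ f_gx; have f0 : f 0 = 0 by have := fZ 0 0; rewrite !scale0r.
apply: xdeg_lt_ind => [|u v|t u|//].
- by rewrite f0; apply: xdeg_lt_zero.
- by rewrite fD; apply: xdeg_ltD.
- by rewrite fZ; apply: xdeg_ltZ.
Qed.

Lemma xdeg_lt_gx e j a : (j < a)%N -> xdeg_lt a (g ^+ e * x ^+ j).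
Proof.
elim/ltn_ind: j => j IHj lt_ja; have [lt_jp | le_pj] := ltnP j p.
  move=> be le_a; have := crd_gx be e (Ordinal lt_jp); rewrite /= => ->.
  suff /negbTE -> : (be.2 : nat) != j by rewrite andbF.
  by rewrite neq_ltn (leq_trans lt_ja le_a) orbT.
have -> : x ^+ j = x ^+ (j - p).+1 by rewrite -{1}(subnKC le_pj) exprD xp -exprS.
by apply: IHj; lia.
Qed.

Lemma xdeg_lt_gX e a : (0 < a)%N -> xdeg_lt a (g ^+ e).
Proof. by move=> a_gt0; have := xdeg_lt_gx e 0 a a_gt0; rewrite mulr1. Qed.

Lemma xdeg_lt_X n : xdeg_lt n.+1 (x ^+ n).
Proof. by have := xdeg_lt_gx 0 n n.+1 (leqnn _); rewrite mul1r. Qed.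

Lemma xdeg_lt_mulr_closed y a c :
  (forall i j, (j < a)%N -> (j < p)%N -> xdeg_lt c (y * (g ^+ i * x ^+ j))) ->
  forall h, xdeg_lt a h -> xdeg_lt c (y * h).
Proof.
move=> y_gx; apply: (xdeg_lt_map ( *%R y)) => // [u v|t u]; first exact: mulrDr.
exact/esym/scalerAr.
Qed.

Lemma xdeg_lt_mull_closed y a c :
  (forall i j, (j < a)%N -> (j < p)%N -> xdeg_lt c (g ^+ i * x ^+ j * y)) ->
  forall h, xdeg_lt a h -> xdeg_lt c (h * y).
Proof.
move=> y_gx; apply: (xdeg_lt_map ( *%R^~ y)) => // [u v|t u]; first exact: mulrDl.
exact/esym/scalerAl.
Qed.

Lemma xdeg_lt_gXM e a h : xdeg_lt a h -> xdeg_lt a (g ^+ e * h).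
Proof.
move: h; apply: xdeg_lt_mulr_closed => i j lt_ja _.
by rewrite mulrA -exprD; apply: xdeg_lt_gx.
Qed.

Lemma xdeg_lt_Mx a h : xdeg_lt a h -> xdeg_lt a.+1 (h * x).
Proof.
move: h; apply: xdeg_lt_mull_closed => i j lt_ja _.
by rewrite -mulrA -exprSr; apply: xdeg_lt_gx.
Qed.

Lemma xdeg_lt_MX n a h : xdeg_lt a h -> xdeg_lt (a + n) (h * x ^+ n).
Proof.
elim: n h a => [|n IHn] h a ha; first by rewrite addn0 mulr1.
by rewrite exprSr mulrA addnS; apply/xdeg_lt_Mx/IHn.
Qed.

Lemma xdeg_lt1_Mg h : xdeg_lt 1 h -> xdeg_lt 1 (h * g).
Proof.
move: h; apply: xdeg_lt_mull_closed => i j lt_j1 _; have -> : j = 0%N by lia.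
by rewrite mulr1 -exprSr; apply: xdeg_lt_gX.
Qed.

Lemma xdeg_lt1_comm_x_gX i : xdeg_lt 1 (x * g ^+ i - g ^+ i * x).
Proof.
elim: i => [|i IHi]; first by rewrite mulr1 mul1r subrr; apply: xdeg_lt_zero.
have -> : x * g ^+ i.+1 - g ^+ i.+1 * x =
    (x * g ^+ i - g ^+ i * x) * g + g ^+ i * (x * g - g * x).
  by rewrite mulrBl mulrBr !mulrA -exprSr addrA subrK -mulrA -exprSr.
have -> : x * g - g * x = g - g ^+ 2 by rewrite -opprB gx_comm opprB.
rewrite mulrBr -exprSr -exprD addn2.
by apply: xdeg_ltD; [apply: xdeg_lt1_Mg | apply: xdeg_ltB; apply: xdeg_lt_gX].
Qed.

Lemma xdeg_lt_xM a h : xdeg_lt a h -> xdeg_lt a.+1 (x * h).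
Proof.
move: h; apply: xdeg_lt_mulr_closed => i j lt_ja _.
have -> : x * (g ^+ i * x ^+ j) =
    (x * g ^+ i - g ^+ i * x) * x ^+ j + g ^+ i * x ^+ j.+1.
  by rewrite mulrBl !mulrA -[g ^+ i * x * _]mulrA -exprS subrK.
apply: xdeg_ltD; last exact: xdeg_lt_gx.
by apply: (@xdeg_lt_le (1 + j)); [lia | apply/xdeg_lt_MX/xdeg_lt1_comm_x_gX].
Qed.

Lemma xdeg_lt_XM n a h : xdeg_lt a h -> xdeg_lt (n + a) (x ^+ n * h).
Proof.
elim: n h a => [|n IHn] h a ha; first by rewrite mul1r.
by rewrite exprS -mulrA addSn; apply/xdeg_lt_xM/IHn.
Qed.

Lemma xdeg_ltM a c h1 h2 :
  xdeg_lt a.+1 h1 -> xdeg_lt c.+1 h2 -> xdeg_lt (a + c).+1 (h1 * h2).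
Proof.
move=> h1a h2c; move: h1 h1a; apply: xdeg_lt_mull_closed => i j lt_ja _.
rewrite -mulrA; apply: xdeg_lt_gXM.
by apply: (@xdeg_lt_le (j + c.+1)); [lia | apply: xdeg_lt_XM].
Qed.

Lemma xdeg_ltMl a c h1 h2 : xdeg_lt a h1 -> xdeg_lt c.+1 h2 -> xdeg_lt (a + c) (h1 * h2).
Proof.
case: a => [/xdeg_lt0_eq0 -> _|a h1a h2c]; first by rewrite mul0r; apply: xdeg_lt_zero.
by rewrite addSn; apply: xdeg_ltM.
Qed.

Lemma xdeg_ltMr a c h1 h2 : xdeg_lt a.+1 h1 -> xdeg_lt c h2 -> xdeg_lt (a + c) (h1 * h2).
Proof.
case: c => [_ /xdeg_lt0_eq0 ->|c h1a h2c]; first by rewrite mulr0; apply: xdeg_lt_zero.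
by rewrite addnS; apply: xdeg_ltM.
Qed.

Lemma xdeg_lt_comm_X n y : xdeg_lt 1 y -> xdeg_lt n (x ^+ n * y - y * x ^+ n).
Proof.
move: y; apply: (xdeg_lt_map (fun y => x ^+ n * y - y * x ^+ n)) => [u v|t u|i j lt_j1 _].
- by rewrite mulrDr mulrDl opprD addrACA.
- by rewrite -scalerAr -scalerAl -scalerBr.
have -> : j = 0%N by lia.
rewrite mulr1; elim: n => [|n IHn]; first by rewrite mulr1 mul1r subrr; apply: xdeg_lt_zero.
have -> : x ^+ n.+1 * g ^+ i - g ^+ i * x ^+ n.+1 =
    x * (x ^+ n * g ^+ i - g ^+ i * x ^+ n) + (x * g ^+ i - g ^+ i * x) * x ^+ n.
  by rewrite mulrBr mulrBl !mulrA -exprS addrA subrK -!mulrA -exprS.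
apply: xdeg_ltD; last by rewrite -add1n; apply/xdeg_lt_MX/xdeg_lt1_comm_x_gX.
case: n IHn => [/xdeg_lt0_eq0 -> |n IHn]; last exact: xdeg_lt_xM.
by rewrite mulr0; apply: xdeg_lt_zero.
Qed.

Lemma horner_algE (P : {poly k}) : evg P = \sum_(i < size P) P`_i *: g ^+ i.
Proof.
rewrite -{1}(coefK P) poly_def linear_sum; apply: eq_bigr => i _.
by rewrite -mul_polyC rmorphM /= horner_algC rmorphXn /= horner_algX -scalerAl mul1r.
Qed.

Lemma xdeg_lt1_evg P : xdeg_lt 1 (evg P).
Proof. by rewrite horner_algE; apply: xdeg_lt_sum => i _; apply/xdeg_ltZ/xdeg_lt_gX. Qed.

Lemma evg_Xn n : evg ('X ^+ n) = g ^+ n.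
Proof. by rewrite rmorphXn /= horner_algX. Qed.

Definition leading (j : nat) (h : H) (P : {poly k}) := xdeg_lt j (h - evg P * x ^+ j).

Lemma leading_zero j : leading j 0 0.
Proof. by rewrite /leading rmorph0 mul0r subr0; apply: xdeg_lt_zero. Qed.

Lemma leadingD j h1 h2 P1 P2 :
  leading j h1 P1 -> leading j h2 P2 -> leading j (h1 + h2) (P1 + P2).
Proof. by rewrite /leading rmorphD mulrDl opprD addrACA; apply: xdeg_ltD. Qed.

Lemma leadingZ j c h P : leading j h P -> leading j (c *: h) (c *: P).
Proof. by rewrite /leading linearZ /= mulr_algl -scalerAl -scalerBr; apply: xdeg_ltZ. Qed.

Lemma leadingN j h P : leading j h P -> leading j (- h) (- P).
Proof. by rewrite -!scaleN1r; apply: leadingZ. Qed.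

Lemma leading_sum j (I : Type) (r : seq I) (C : pred I) (F : I -> H) (G : I -> {poly k}) :
  (forall i, C i -> leading j (F i) (G i)) ->
  leading j (\sum_(i <- r | C i) F i) (\sum_(i <- r | C i) G i).
Proof.
move=> FG; apply: (big_ind2 (leading j)) => //; first exact: leading_zero.
by move=> *; apply: leadingD.
Qed.

Lemma leading_xdeg_lt j h P : leading j h P -> xdeg_lt j.+1 h.
Proof.
move=> hP; rewrite -[h](subrK (evg P * x ^+ j)); apply: xdeg_ltD.
  exact: xdeg_lt_le _ _ _ (leqnSn j) hP.
by apply: (@xdeg_ltM 0 j); [apply: xdeg_lt1_evg | apply: xdeg_lt_X].
Qed.

(* Leading terms multiply because x^a P(g) = P(g) x^a up to x-degree < a. *)
Lemma leadingM a c h1 h2 P1 P2 :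
  leading a h1 P1 -> leading c h2 P2 -> leading (a + c) (h1 * h2) (P1 * P2).
Proof.
move=> h1P1 h2P2; rewrite /leading; set y1 := evg P1; set y2 := evg P2.
have -> : h1 * h2 - evg (P1 * P2) * x ^+ (a + c) =
    (h1 - y1 * x ^+ a) * h2 + y1 * x ^+ a * (h2 - y2 * x ^+ c)
    + y1 * (x ^+ a * y2 - y2 * x ^+ a) * x ^+ c.
  rewrite rmorphM exprD !mulrBl !mulrBr !mulrBl !mulrA.
  by rewrite !addrA !subrK.
apply: xdeg_ltD; first apply: xdeg_ltD.
- exact: (@xdeg_ltMl a c _ _ h1P1 (leading_xdeg_lt _ _ _ h2P2)).
- apply: (@xdeg_ltMr a c); last exact: h2P2.
  by apply: (@xdeg_ltM 0 a); [apply: xdeg_lt1_evg | apply: xdeg_lt_X].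
- apply: (@xdeg_ltMl a c); last exact: xdeg_lt_X.
  by apply: (@xdeg_ltMr 0 a); [apply: xdeg_lt1_evg | apply/xdeg_lt_comm_X/xdeg_lt1_evg].
Qed.

Lemma leading_gx i j : leading j (g ^+ i * x ^+ j) ('X ^+ i).
Proof. by rewrite /leading evg_Xn subrr; apply: xdeg_lt_zero. Qed.

Lemma leading_x n : leading n (x ^+ n) 1.
Proof. by have := leading_gx 0 n; rewrite mul1r expr0. Qed.

Lemma leading_g i : leading 0 (g ^+ i) ('X ^+ i).
Proof. by have := leading_gx i 0; rewrite mulr1. Qed.

Lemma crd_g (i : 'I_p) e : crd b (i, ordp 0) (g ^+ e) = (i == (e %% p)%N :> nat)%:R.
Proof. by have := crd_gx (i, ordp 0) e (ordp 0); rewrite /= mod0n mulr1 andbT. Qed.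

Lemma crd_leading (i j : 'I_p) h P :
  leading j h P -> crd b (i, j) h = crd b (i, ordp 0) (evg P).
Proof.
move=> /(_ (i, j) (leqnn _)) /eqP; rewrite linearB /= subr_eq0 => /eqP ->.
move: (evg P) (xdeg_lt1_evg P); apply: xdeg_lt_ind.
- by rewrite mul0r !linear0.
- by move=> u v Eu Ev; rewrite mulrDl !linearD /= Eu Ev.
- by move=> c u Eu; rewrite -scalerAl !linearZ /= Eu.
move=> e j' lt_j'1 _; have -> : j' = 0%N by lia.
by rewrite mulr1 crd_gx crd_g eqxx andbT.
Qed.

Definition DeltaX : B -> B -> k := tadd2 (pt2 b x 1) (pt2 b g x).

Lemma mulFid_pt2_DeltaX (F : {linear H -> H}) a c w :
  mulFid b F (tmul2 b (pt2 b a c) (tmul2 b DeltaX w)) =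
  mulFid b F (tmul2 b (pt2 b (a * x) c) w) + mulFid b F (tmul2 b (pt2 b (a * g) (c * x)) w).
Proof. by rewrite tmul2DL tmul2DR !tmul2_pt2A // mulFidD mulr1. Qed.

Lemma mulFid_DeltaX_pow (F : {linear H -> H}) j a c :
  mulFid b F (tmul2 b (pt2 b a c) (tpow2 b DeltaX j)) =
  F (a * x ^+ j) * c +
  \sum_(t < j) mulFid b F (tmul2 b (pt2 b (a * x ^+ t * g) (c * x)) (tpow2 b DeltaX (j - t.+1))).
Proof.
elim: j a c => [|j IHj] a c.
  by rewrite big_ord0 addr0 tmul2_pt2 // !mulr1 mulFid_pt2.
rewrite [tpow2 _ _ _.+1]/tpow2 iterS -/(tpow2 _ _ _) mulFid_pt2_DeltaX IHj.
rewrite big_ord_recl /= expr0 mulr1 subSS subn0 -mulrA -exprS addrAC addrA.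
by congr (_ + _ + _); apply: eq_bigr => t _; rewrite /bump /= add1n subSS exprS !mulrA.
Qed.

Section LeadingMap.
Variables (F : {linear H -> H}) (q r : {poly k}) (n : nat).
Hypothesis q_p : evg q ^+ p = 1.
Hypothesis F_gx : forall i j, (i < p)%N -> (j < n)%N ->
  leading j (F (g ^+ i * x ^+ j)) (q ^+ i * r ^+ j).

Lemma F_gx_mod i j : (j < n)%N -> leading j (F (g ^+ i * x ^+ j)) (q ^+ i * r ^+ j).
Proof.
move=> lt_jn; have := F_gx (i %% p) j (ltn_pmod i p_gt0) lt_jn.
by rewrite expr_mod // /leading !rmorphM !rmorphXn /= expr_mod.
Qed.

Lemma leading_map d h P :
  (d < n)%N -> leading d h P -> leading d (F h) ((P \Po q) * r ^+ d).
Proof.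
move=> lt_dn hP; rewrite -[h](subrK (evg P * x ^+ d)) linearD -[_ * r ^+ d]add0r.
apply: leadingD.
  move: hP; rewrite /leading rmorph0 mul0r subr0; move: (h - _).
  apply: (xdeg_lt_map F) => [u v|t u|i j lt_jd _]; [exact: linearD | exact: linearZ |].
  have lt_jn : (j < n)%N by lia.
  exact: xdeg_lt_le _ _ _ lt_jd (leading_xdeg_lt _ _ _ (F_gx_mod i j lt_jn)).
rewrite horner_algE mulr_suml linear_sum comp_polyE mulr_suml.
apply: leading_sum => i _; rewrite -scalerAl linearZ -scalerAl; apply: leadingZ.
exact: F_gx_mod.
Qed.

Lemma leading_mulFid_DeltaX_pow j a c P P' d e :
  leading d a P -> leading e c P' -> (d + j < n)%N ->
  leading (d + e + j) (mulFid b F (tmul2 b (pt2 b a c) (tpow2 b DeltaX j)))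
    ((P \Po q) * r ^+ d * P' * (r + q) ^+ j).
Proof.
elim: j a c P d e => [|j IHj] a c P d e aP cP lt_djn.
  rewrite addn0 in lt_djn; rewrite addn0 expr0 mulr1 tmul2_pt2 // !mulr1 mulFid_pt2 //.
  exact: leadingM (leading_map _ _ _ lt_djn aP) cP.
rewrite [tpow2 _ _ _.+1]/tpow2 iterS -/(tpow2 _ _ _) mulFid_pt2_DeltaX.
have -> : (P \Po q) * r ^+ d * P' * (r + q) ^+ j.+1 =
    (P \Po q) * r ^+ d.+1 * P' * (r + q) ^+ j + ((P * 'X) \Po q) * r ^+ d * P' * (r + q) ^+ j.
  by rewrite comp_polyM comp_polyX !exprS; ring.
apply: leadingD.
  have -> : (d + e + j.+1 = d.+1 + e + j)%N by lia.
  apply: IHj cP _; last by lia.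
  by rewrite -addn1 -[P]mulr1; apply: leadingM aP (leading_x 1).
have -> : (d + e + j.+1 = d + e.+1 + j)%N by lia.
apply: IHj; last by lia.
- by rewrite -[d]addn0; apply: leadingM aP (leading_g 1).
- by rewrite -addn1 -[P']mulr1; apply: leadingM cP (leading_x 1).
Qed.

End LeadingMap.

Local Notation Dl := (radDelta p g x).
Local Notation ep := (radEps p g x).

Lemma radDelta_linear c u v be l : Dl (c *: u + v) be l = c * Dl u be l + Dl v be l.
Proof.
rewrite /radDelta mulr_sumr -big_split; apply: eq_bigr => al _.
by rewrite linearD linearZ /= mulrDl mulrA.
Qed.

Lemma radDelta_gx (i j : 'I_p) :
  Dl (g ^+ i * x ^+ j) = tmul2 b (pt2 b (g ^+ i) (g ^+ i)) (tpow2 b DeltaX j).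
Proof.
apply: functional_extensionality => be; apply: functional_extensionality => l.
rewrite -[g ^+ i * x ^+ j]/(b (i, j)) /radDelta (bigD1 (i, j)) //= crd_basis // eqxx mul1r.
rewrite big1 => [|al ne_al]; last by rewrite crd_basis // eq_sym (negbTE ne_al) mul0r.
by rewrite addr0 /radDelta_basis /= tpow2_pt2.
Qed.

Lemma radEps_b (al : B) : ep (b al) = 0 ^+ al.2.
Proof.
rewrite /radEps (bigD1 al) //= crd_basis // eqxx.
rewrite big1 => [|al' ne_al']; last by rewrite crd_basis // eq_sym (negbTE ne_al') mul0r.
by rewrite addr0 mul1r expr1n mul1r.
Qed.

Definition sweedler m : H -> H := Pw b Dl ep m.+1.

Lemma sweedler_is_linear m : linear (sweedler m).
Proof.
case: m => [|m] c u v; first by rewrite /sweedler !Pw1.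
rewrite /sweedler !PwSS /mulFid scaler_sumr -big_split; apply: eq_bigr => be _.
rewrite scaler_sumr -big_split; apply: eq_bigr => l _.
by rewrite radDelta_linear scalerDl scalerA.
Qed.
HB.instance Definition _ m :=
  GRing.isLinear.Build k H H *:%R (sweedler m) (sweedler_is_linear m).

Definition geom_poly m : {poly k} := \sum_(t < m.+1) 'X ^+ t.

Lemma geom_polyS m : geom_poly m.+1 = geom_poly m + 'X ^+ m.+1.
Proof. by rewrite /geom_poly big_ord_recr. Qed.

Lemma evg_Xn_p n : evg ('X ^+ n) ^+ p = 1.
Proof. by rewrite evg_Xn -exprM mulnC exprM gp expr1n. Qed.

Lemma leading_sweedler m i j : (i < p)%N -> (j < p)%N ->
  leading j (sweedler m (g ^+ i * x ^+ j)) (('X ^+ m.+1) ^+ i * geom_poly m ^+ j).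
Proof.
elim: m i j => [|m IHm] i j lt_ip lt_jp.
  by rewrite /sweedler Pw1 // /geom_poly big_ord1 expr1n mulr1; apply: leading_gx.
rewrite /sweedler PwSS -/(sweedler m) (radDelta_gx (Ordinal lt_ip) (Ordinal lt_jp)) /=.
rewrite geom_polyS exprSr exprMn.
have := leading_mulFid_DeltaX_pow (sweedler m) ('X ^+ m.+1) (geom_poly m) p
  (evg_Xn_p _) IHm j _ _ _ _ 0 0 (leading_g i) (leading_g i) lt_jp.
by rewrite comp_Xn_poly expr0 mulr1.
Qed.

Lemma crd_gX_evg (i : 'I_p) a W :
  crd b (i, ordp 0) (g ^+ a * evg W) =
  \sum_(kk < size W) W`_kk * (i == ((a + kk) %% p)%N :> nat)%:R.
Proof.
rewrite horner_algE mulr_sumr linear_sum; apply: eq_bigr => kk _.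
by rewrite -scalerAr linearZ /= -exprD crd_g.
Qed.

Lemma eq_modp_predp_shift (i : 'I_p) m kk :
  (i == ((p.-1 * (m.+1 * i) + kk) %% p)%N :> nat) = ((m.+2 * i) %% p == kk %% p)%N.
Proof.
rewrite -{1}(modn_small (ltn_ord i)) -(eqn_modDr (m.+1 * i)) -{1}(mul1n i) -mulnDl.
have -> : (p.-1 * (m.+1 * i) + kk + m.+1 * i = (m.+1 * i) * p + kk)%N.
  set z := (m.+1 * i)%N; have := p_gt0; nia.
by rewrite modnMDl.
Qed.

Lemma gX_mul_gX_predp i : g ^+ i * g ^+ (p.-1 * i) = 1.
Proof. by rewrite -exprD -{1}(mul1n i) -mulnDl add1n prednK ?p_gt0 // exprM gp expr1n. Qed.

Lemma leading_evg j h P P' : evg P = evg P' -> leading j h P -> leading j h P'.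
Proof. by rewrite /leading => ->. Qed.

Section Antipode.
Variable S : {linear H -> H}.
Hypothesis S_antipode : forall h, mulFid b S (Dl h) = ep h *: 1.

(* q(g) = g^-1 and r(g) = -g^-1 *)
Local Notation q := ('X ^+ p.-1 : {poly k}).
Local Notation r := (- 'X ^+ p.-1 : {poly k}).

Lemma antipode_gx i j : (i < p)%N -> (j < p)%N ->
  S (g ^+ i * x ^+ j) * g ^+ i = 0 ^+ j *: 1 -
  \sum_(t < j) mulFid b S (tmul2 b (pt2 b (g ^+ i * x ^+ t * g) (g ^+ i * x))
                            (tpow2 b DeltaX (j - t.+1))).
Proof.
move=> lt_ip lt_jp; have := S_antipode (g ^+ i * x ^+ j).
rewrite (radDelta_gx (Ordinal lt_ip) (Ordinal lt_jp)) mulFid_DeltaX_pow.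
rewrite -[g ^+ i * x ^+ j]/(b (Ordinal lt_ip, Ordinal lt_jp)) radEps_b /=.
by move=> <-; rewrite addrK.
Qed.

Lemma leading_antipode_sum i j :
  (forall i' j', (i' < p)%N -> (j' < j.+1)%N ->
     leading j' (S (g ^+ i' * x ^+ j')) (q ^+ i' * r ^+ j')) ->
  leading j.+1 (\sum_(t < j.+1) mulFid b S (tmul2 b (pt2 b (g ^+ i * x ^+ t * g) (g ^+ i * x))
                                           (tpow2 b DeltaX (j.+1 - t.+1))))
    (q ^+ i.+1 * r ^+ j * 'X ^+ i).
Proof.
move=> S_gx.
have -> : q ^+ i.+1 * r ^+ j * 'X ^+ i = \sum_(t < j.+1)
    ((('X ^+ i * 'X) \Po q) * r ^+ t * ('X ^+ i * 1) * (r + q) ^+ (j.+1 - t.+1)).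
  rewrite big_ord_recr /= subnn expr0 !mulr1 big1 ?add0r.
    by rewrite comp_polyM comp_Xn_poly comp_polyX -exprSr.
  by move=> t _; rewrite addNr expr0n subSS subn_eq0 leqNgt ltn_ord mulr0.
apply: leading_sum => t _.
have gxg : leading (t + 0) (g ^+ i * x ^+ t * g) ('X ^+ i * 'X).
  by apply: leadingM (leading_gx i t) (leading_g 1).
have gx : leading (0 + 1) (g ^+ i * x) ('X ^+ i * 1).
  by apply: leadingM (leading_g i) (leading_x 1).
have := leading_mulFid_DeltaX_pow S q r j.+1 (evg_Xn_p _) S_gx (j.+1 - t.+1) _ _ _ _ _ _ gxg gx.
have lt_tj := ltn_ord t.
have -> : (t + 0 + (0 + 1) + (j.+1 - t.+1) = j.+1)%N by lia.
by rewrite addn0 => lead_t; apply: lead_t; lia.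
Qed.

Lemma leading_antipode i j : (i < p)%N -> (j < p)%N ->
  leading j (S (g ^+ i * x ^+ j)) (q ^+ i * r ^+ j).
Proof.
move: i; elim/ltn_ind: j => j IHj i lt_ip lt_jp.
have Sgx := antipode_gx i j lt_ip lt_jp.
case: j IHj lt_jp Sgx => [|j] IHj lt_jp Sgx.
  rewrite big_ord0 subr0 expr0 scale1r in Sgx.
  have -> : S (g ^+ i * x ^+ 0) = g ^+ (p.-1 * i).
    by rewrite -[LHS]mulr1 -(gX_mul_gX_predp i) mulrA Sgx mul1r.
  apply: leading_evg (leading_g (p.-1 * i)).
  by rewrite expr0 mulr1 evg_Xn -exprM mulnC evg_Xn.
have S_gx i' j' : (i' < p)%N -> (j' < j.+1)%N ->
    leading j' (S (g ^+ i' * x ^+ j')) (q ^+ i' * r ^+ j').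
  by move=> lt_i'p lt_j'j; apply: IHj => //; apply: ltn_trans lt_jp.
rewrite expr0n /= scale0r sub0r in Sgx.
have := leadingM _ _ _ _ _ _
  (leadingN _ _ _ (leading_antipode_sum i j S_gx)) (leading_g (p.-1 * i)).
rewrite -Sgx -mulrA gX_mul_gX_predp mulr1 addn0; apply: leading_evg.
have -> : - (q ^+ i.+1 * r ^+ j * 'X ^+ i) * 'X ^+ (p.-1 * i) =
    q ^+ i * r ^+ j.+1 * ('X ^+ i * 'X ^+ (p.-1 * i)) by rewrite !exprS; ring.
rewrite [LHS]rmorphM -[RHS]mulr1; congr (_ * _).
by rewrite rmorphM /= !evg_Xn gX_mul_gX_predp.
Qed.

Lemma antipode1 : S 1 = 1.
Proof.
have := leading_antipode 0 0 p_gt0 p_gt0; rewrite /leading !expr0 !mulr1 rmorph1.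
by move=> /xdeg_lt0_eq0 /eqP; rewrite subr_eq0 => /eqP.
Qed.

Definition diag_poly m j : {poly k} := (geom_poly m ^+ j \Po q) * r ^+ j.

Lemma crd_antipode_sweedler m (be : B) :
  crd b be (S (sweedler m (b be))) =
  \sum_(kk < size (diag_poly m be.2))
     (diag_poly m be.2)`_kk * ((m.+2 * be.1) %% p == kk %% p)%N%:R.
Proof.
case: be => i j /=.
have := leading_map S q r p (evg_Xn_p _) leading_antipode j _ _ (ltn_ord j)
  (leading_sweedler m i j (ltn_ord i) (ltn_ord j)).
move/(crd_leading i j); rewrite comp_polyM -exprM comp_Xn_poly -exprM -mulrA.
rewrite rmorphM /= evg_Xn crd_gX_evg => ->.
by apply: eq_bigr => kk _; rewrite eq_modp_predp_shift.
Qed.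

Lemma diag_poly1 m j : (diag_poly m j).[1] = (- m.+1%:R) ^+ j.
Proof.
rewrite /diag_poly hornerM horner_exp horner_comp horner_exp !hornerE expr1n.
rewrite /geom_poly horner_sum (eq_bigr (fun _ => 1)) => [|t _]; last by rewrite hornerXn expr1n.
by rewrite sumr_const card_ord -exprMn mulrN1.
Qed.

Hypothesis p_char : p \in [pchar k].

Lemma indicator1 : indicator b Dl ep S 1 = 1.
Proof.
have b00 : b (ordp 0, ordp 0) = 1 by rewrite radB_ordp /= mod0n !expr0 mulr1.
rewrite /indicator /=; under eq_bigr => be _ do rewrite linearZ /= antipode1 linearZ /=.
rewrite (bigD1 (ordp 0, ordp 0)) //= -b00 crd_basis // eqxx mulr1 radEps_b /= mod0n.
rewrite big1 ?addr0 // => be ne_be.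
by rewrite crd_basis // eq_sym (negbTE ne_be) mulr0.
Qed.

Lemma indicatorSS m : indicator b Dl ep S m.+2 = if (p %| m.+2)%N then 0 else 1.
Proof.
rewrite /indicator /= -/(sweedler m).
under eq_bigr => be _ do rewrite crd_antipode_sweedler.
rewrite -(pair_bigA _ (fun i j : 'I_p => \sum_(kk < size (diag_poly m j))
  (diag_poly m j)`_kk * ((m.+2 * i) %% p == kk %% p)%N%:R)) /= exchange_big.
under eq_bigr => j _ do rewrite exchange_big /=.
under eq_bigr => j _ do under eq_bigr => kk _ do rewrite -mulr_sumr sum_mul_modp_eq //.
case: ifP => [_ | /negbT p_m].
  by rewrite big1 // => j _; rewrite big1 // => kk _; rewrite mulr0.
under eq_bigr => j _ do under eq_bigr => kk _ do rewrite mulr1.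
under eq_bigr => j _ do rewrite sum_coef diag_poly1.
apply: sum_expr_fixed.
  by rewrite -(pFrobenius_autE p_char) pFrobenius_autN pFrobenius_aut_nat.
by rewrite -subr_eq0 -opprD natr1 oppr_eq0 -(dvdn_pcharf p_char).
Qed.

Lemma indicator_radford n :
  (0 < n)%N -> indicator b Dl ep S n = if (p %| n)%N then 0 else 1.
Proof.
case: n => [//|[_|m _]]; last exact: indicatorSS.
by rewrite indicator1 dvdn1 gtn_eqF.
Qed.

End Antipode.
End Radford.

Theorem theorem3p3 (k : closedFieldType) (p : nat) (H : falgType k) (g x : H)
    (S : {linear H -> H}) :
  p \in [pchar k] ->
  radford_relations p g x ->
  basis_of fullv (basisT (radB p g x)) ->
  is_antipode (radB p g x) (radDelta p g x) (radEps p g x) S ->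
  forall n : nat, (0 < n)%N ->
    indicator (radB p g x) (radDelta p g x) (radEps p g x) S n
    = (if (p %| n)%N then 0 else 1).
Proof.
move=> p_char rel b_basis [S_antipode _] n n_gt0.
have p_gt1 : (1 < p)%N := prime_gt1 (pcharf_prime p_char).
have [gp xp gx_comm] : [/\ g ^+ p = 1, x ^+ p = x & g * x - x * g = g ^+ 2 - g].
  by move: rel; rewrite /radford_relations; case: eqP => [-> [g2 x2 gx]|_ //]; rewrite g2.
exact: (indicator_radford _ _ _ _ _ p_gt1 gp xp gx_comm b_basis S S_antipode p_char n n_gt0).
Qed.
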